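(* Let $\kappa>0$, $u_0>0$, and let $u$ be the solution of $\frac{d}{dr}\big(u'/\sqrt{1+u'^2}\big)=\kappa u$, $u(0)=u_0$, $u'(0)=0$. Let $a>0$ and $0\le\gamma<\pi/2$ be such that $u$ is defined on $[0,a)$ and meets the vertical wall $r=a$ with contact angle $\gamma$, i.e. $\sin\psi(a)=\cos\gamma$, where $\sin\psi=u'/\sqrt{1+u'^2}$ (extended continuously to $r=a$). Then $q=u(a)-u(0)$ satisfies $$\frac1{\kappa u_0}\Big(1-\sqrt{1-a^2\kappa^2u_0^2}\Big)<q<\frac a{\cos\gamma}(1-\sin\gamma)$$ and $$q>\frac{2a(1-\sin\gamma)}{1+\sqrt{1+2\kappa a^2(1-\sin\gamma)}}.$$
   Context: $u$ is the profile of a $\kappa$-cylindrical capillary surface $z=u(x)$ between vertical plates $x=\pm a$; $\psi$ denotes the inclination angle of the graph. *)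

From Stdlib Require Import Reals.
From Coquelicot Require Import Coquelicot.
Open Scope R_scope.

(* sin psi, where psi is the inclination angle of the graph z = u(r):
   sin psi = u' / sqrt(1 + u'^2). *)
Definition sin_psi (du : R -> R) (r : R) : R := du r / sqrt (1 + du r ^ 2).

Definition capillary_solution (kappa u0 a : R) (u du : R -> R) : Prop :=
  (forall r, 0 <= r < a -> is_derive u r (du r)) /\
  (forall r, 0 <= r < a -> is_derive (sin_psi du) r (kappa * u r)) /\
  u 0 = u0 /\ du 0 = 0.

(* Along the solution, cos psi + kappa u^2 / 2 is a first integral, equal to
   1 + kappa u0^2 / 2; hence u >= u0, and sin psi increases with derivative
   kappa u >= kappa u0.  This gives kappa u0 r < sin psi (r), and, since
   sin psi < r kappa u makes sin psi (r) / r increasing, also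
   sin psi (r) < (cos gamma / a) r.  As u' = tan psi is an increasing function
   of sin psi, u - u0 lies strictly between the circular arcs along which
   sin psi equals kappa u0 r and (cos gamma / a) r: these are the first two
   bounds.  The first integral at the wall gives
   1 - sin gamma = kappa q (2 u0 + q) / 2, and with kappa u0 a < cos gamma <= 1
   this yields the third bound. *)

From Stdlib Require Import Reals Lra Psatz.
From Coquelicot Require Import Coquelicot.
Open Scope R_scope.

Section Limits.
Context {T : Type} {F : (T -> Prop) -> Prop} {FF : Filter F}.

Lemma filterlim_Rplus (f g : T -> R) lf lg :
  filterlim f F (locally lf) -> filterlim g F (locally lg) ->
  filterlim (fun x => f x + g x) F (locally (lf + lg)).
Proof.
  intros Hf Hg.
  exact (filterlim_comp_2 f g Rplus Hf Hg (filterlim_plus (V := R_NormedModule) lf lg)).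
Qed.

Lemma filterlim_Rminus (f g : T -> R) lf lg :
  filterlim f F (locally lf) -> filterlim g F (locally lg) ->
  filterlim (fun x => f x - g x) F (locally (lf - lg)).
Proof.
  intros Hf Hg. apply filterlim_Rplus; [exact Hf |].
  exact (filterlim_comp _ _ _ g Ropp _ _ _ Hg (filterlim_opp (V := R_NormedModule) lg)).
Qed.

Lemma filterlim_Rmult (f g : T -> R) lf lg :
  filterlim f F (locally lf) -> filterlim g F (locally lg) ->
  filterlim (fun x => f x * g x) F (locally (lf * lg)).
Proof.
  intros Hf Hg.
  exact (filterlim_comp_2 f g Rmult Hf Hg (filterlim_mult (K := R_AbsRing) lf lg)).
Qed.

End Limits.

Lemma is_derive_continuity_pt f x l : is_derive f x l -> continuity_pt f x.
Proof.
  intros Hf. apply derivable_continuous_pt. exists l. now apply is_derive_Reals.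
Qed.

Lemma is_derive_pos_lt f df lo hi :
  (forall r, lo <= r < hi -> is_derive f r (df r)) ->
  (forall r, lo < r < hi -> 0 < df r) ->
  forall y, lo < y < hi -> f lo < f y.
Proof.
  intros Hf Hdf y Hy.
  destruct (MVT_cor2 f df lo y) as [c [Hfc Hc]]; [lra| |].
  - intros r Hr. apply is_derive_Reals, Hf. lra.
  - assert (0 < df c) by (apply Hdf; lra). nra.
Qed.

Lemma is_derive_0_const f lo hi :
  (forall r, lo <= r < hi -> is_derive f r 0) ->
  forall r, lo <= r < hi -> f r = f lo.
Proof.
  intros Hf r Hr. destruct (Req_dec r lo) as [-> | Hne]; [reflexivity |].
  destruct (MVT_cor2 f (fun _ => 0) lo r) as [c [Hfc _]]; [lra| |lra].
  intros x Hx. apply is_derive_Reals, Hf. lra.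
Qed.

Lemma filterlim_at_left_of_continuous (h : R -> R) (x : R) :
  continuous h x -> filterlim h (at_left x) (locally (h x)).
Proof.
  intros Hh. eapply filterlim_filter_le_1; [apply filter_le_within | exact Hh].
Qed.

Lemma at_left_interval lo hi : lo < hi -> at_left hi (fun t => lo < t < hi).
Proof.
  intros Hlo. exists (mkposreal (hi - lo) ltac:(lra)). intros t Ht Hthi.
  unfold ball in Ht; simpl in Ht; unfold AbsRing_ball, abs, minus, plus, opp in Ht; simpl in Ht.
  apply Rabs_def2 in Ht. lra.
Qed.

Lemma filterlim_at_left_le f g hi b lf lg :
  b < hi -> (forall t, b < t < hi -> f t <= g t) ->
  filterlim f (at_left hi) (locally lf) -> filterlim g (at_left hi) (locally lg) ->
  lf <= lg.
Proof.
  intros Hb Hfg Hf Hg.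
  apply (filterlim_le (F := at_left hi) f g lf lg); [| exact Hf | exact Hg].
  exact (filter_imp _ _ Hfg (at_left_interval b hi Hb)).
Qed.

Lemma is_derive_pos_lt_left_lim f df lo hi l :
  lo < hi ->
  (forall r, lo <= r < hi -> is_derive f r (df r)) ->
  (forall r, lo < r < hi -> 0 < df r) ->
  filterlim f (at_left hi) (locally l) -> f lo < l.
Proof.
  intros Hhi Hf Hdf Hl.
  set (m := (lo + hi) / 2).
  assert (Hm : f lo < f m) by (apply (is_derive_pos_lt f df lo hi); unfold m; auto; lra).
  enough (f m <= l) by lra.
  apply (filterlim_at_left_le (fun _ => f m) f hi m);
    [unfold m; lra | | apply filterlim_const | exact Hl].
  intros t Ht. apply Rlt_le.
  apply (is_derive_pos_lt f df m hi); [intros; apply Hf | intros; apply Hdf |]; unfold m in *; lra.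
Qed.

Definition tan_of_sin (t : R) : R := t / sqrt (1 - t ^ 2).

Lemma tan_of_sin_lt x y : 0 <= x -> x < y -> y < 1 -> tan_of_sin x < tan_of_sin y.
Proof.
  intros Hx Hxy Hy. unfold tan_of_sin.
  assert (Hsx : 0 < sqrt (1 - x ^ 2)) by (apply sqrt_lt_R0; nra).
  assert (Hsy : 0 < sqrt (1 - y ^ 2)) by (apply sqrt_lt_R0; nra).
  assert (sqrt (1 - y ^ 2) <= sqrt (1 - x ^ 2)) by (apply sqrt_le_1_alt; nra).
  apply Rmult_lt_reg_r with (sqrt (1 - x ^ 2) * sqrt (1 - y ^ 2)); [nra |].
  field_simplify; nra.
Qed.

Lemma sin_psi_bounds du r : -1 < sin_psi du r < 1.
Proof.
  unfold sin_psi.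
  assert (HS : 0 < sqrt (1 + du r ^ 2)) by (apply sqrt_lt_R0; nra).
  assert (HS2 : sqrt (1 + du r ^ 2) * sqrt (1 + du r ^ 2) = 1 + du r ^ 2)
    by (apply sqrt_sqrt; nra).
  split; apply Rmult_lt_reg_r with (sqrt (1 + du r ^ 2)); auto; field_simplify; nra.
Qed.

Lemma tan_of_sin_psi du r : tan_of_sin (sin_psi du r) = du r.
Proof.
  unfold tan_of_sin, sin_psi.
  assert (HS : 0 < sqrt (1 + du r ^ 2)) by (apply sqrt_lt_R0; nra).
  assert (HS2 : sqrt (1 + du r ^ 2) ^ 2 = 1 + du r ^ 2) by (apply pow2_sqrt; nra).
  replace (1 - (du r / sqrt (1 + du r ^ 2)) ^ 2) with ((1 / sqrt (1 + du r ^ 2)) ^ 2)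
    by (field_simplify; [rewrite HS2; f_equal; ring | lra..]).
  rewrite sqrt_pow2 by (apply Rlt_le, Rdiv_lt_0_compat; lra).
  field. lra.
Qed.

(* The circle of radius 1 / k through the origin with horizontal tangent there:
   along it sin psi = k r. *)
Definition arc (k r : R) : R := 1 / k * (1 - sqrt (1 - (k * r) ^ 2)).

Lemma arc_0 k : arc k 0 = 0.
Proof. unfold arc. replace (1 - (k * 0) ^ 2) with 1 by ring. rewrite sqrt_1. ring. Qed.

Lemma is_derive_arc k r :
  0 < k -> -1 < k * r < 1 -> is_derive (arc k) r (tan_of_sin (k * r)).
Proof.
  intros Hk Hkr. unfold arc, tan_of_sin.
  assert (0 < sqrt (1 - (k * r) ^ 2)) by (apply sqrt_lt_R0; nra).
  auto_derive; [nra |].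
  replace (1 + - (k * r * (k * r * 1))) with (1 - (k * r) ^ 2) by ring.
  field. lra.
Qed.

Lemma continuous_arc k r : continuous (arc k) r.
Proof.
  apply (continuous_mult (fun _ => 1 / k) (fun r => 1 - sqrt (1 - (k * r) ^ 2))).
  - apply continuous_const.
  - apply (continuous_minus (fun _ => 1) (fun r => sqrt (1 - (k * r) ^ 2))).
    + apply continuous_const.
    + apply continuous_sqrt_comp.
      apply (ex_derive_continuous (K := R_AbsRing) (V := R_NormedModule)). auto_derive. auto.
Qed.

Lemma energy_relation_lower_bound kappa u0 a q B :
  0 < kappa -> 0 < u0 -> 0 < a -> 0 < q -> kappa * u0 * a < 1 ->
  B = kappa * q * (2 * u0 + q) / 2 ->
  2 * a * B / (1 + sqrt (1 + 2 * kappa * a ^ 2 * B)) < q.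
Proof.
  intros Hk Hu0 Ha Hq Hka HB.
  assert (HBpos : 0 < B)
    by (rewrite HB; apply Rdiv_lt_0_compat; [apply Rmult_lt_0_compat; nra | lra]).
  set (S := sqrt (1 + 2 * kappa * a ^ 2 * B)).
  assert (HS0 : 0 <= S) by apply sqrt_pos.
  assert (HS2 : S * S = 1 + 2 * kappa * a ^ 2 * B).
  { apply sqrt_sqrt. assert (0 < a ^ 2) by (apply pow_lt; lra).
    assert (0 < kappa * a ^ 2 * B) by (repeat apply Rmult_lt_0_compat; lra). lra. }
  assert (Hkaq : 0 < kappa * a * q) by (apply Rmult_lt_0_compat; nra).
  assert (HSlt : S < kappa * a * q + 1).
  { assert (S * S < (kappa * a * q + 1) * (kappa * a * q + 1)).
    { rewrite HS2, HB. assert (0 < kappa * a * q * (1 - kappa * u0 * a)) by nra. nra. }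
    nra. }
  apply (Rmult_lt_reg_r (kappa * a * (1 + S))); [nra |].
  replace (2 * a * B / (1 + S) * (kappa * a * (1 + S))) with (S * S - 1)
    by (rewrite HS2; field; lra).
  nra.
Qed.

Section Capillary.

Variables (kappa u0 a c : R) (u du : R -> R).
Hypothesis kappa_pos : 0 < kappa.
Hypothesis u0_pos : 0 < u0.
Hypothesis a_pos : 0 < a.
Hypothesis sol : capillary_solution kappa u0 a u du.
Hypothesis u_lim : filterlim u (at_left a) (locally (u a)).
Hypothesis contact : filterlim (sin_psi du) (at_left a) (locally c).

Local Notation s := (sin_psi du).

Let u_derive : forall r, 0 <= r < a -> is_derive u r (du r) := proj1 sol.
Let s_derive : forall r, 0 <= r < a -> is_derive s r (kappa * u r) := proj1 (proj2 sol).
Let u_at_0 : u 0 = u0 := proj1 (proj2 (proj2 sol)).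
Let du_at_0 : du 0 = 0 := proj2 (proj2 (proj2 sol)).

Lemma sin_psi_at_0 : s 0 = 0.
Proof. unfold sin_psi. rewrite du_at_0. unfold Rdiv. ring. Qed.

Lemma energy_conservation r : 0 <= r < a ->
  sqrt (1 - s r ^ 2) + kappa * u r ^ 2 / 2 = 1 + kappa * u0 ^ 2 / 2.
Proof.
  intros Hr.
  assert (Hderiv : forall t, 0 <= t < a ->
    is_derive (fun t => sqrt (1 - s t ^ 2) + kappa * u t ^ 2 / 2) t 0).
  { intros t Ht.
    pose proof (s_derive t Ht) as Hs. pose proof (u_derive t Ht) as Hu.
    pose proof (sin_psi_bounds du t) as Hbd.
    assert (Hsq : 0 < sqrt (1 - s t ^ 2)) by (apply sqrt_lt_R0; nra).
    auto_derive.
    - repeat split; [eexists; exact Hs | nra | eexists; exact Hu].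
    - rewrite (is_derive_unique (fun x : R => s x) t _ Hs),
        (is_derive_unique (fun x : R => u x) t _ Hu).
      rewrite <- (tan_of_sin_psi du t). unfold tan_of_sin.
      replace (1 + - (s t * (s t * 1))) with (1 - s t ^ 2) by ring.
      field. lra. }
  rewrite (is_derive_0_const _ 0 a Hderiv r Hr), sin_psi_at_0, u_at_0.
  replace (1 - 0 ^ 2) with 1 by ring. rewrite sqrt_1. reflexivity.
Qed.

Lemma u_sq_ge_u0_sq r : 0 <= r < a -> u0 ^ 2 <= u r ^ 2.
Proof.
  intros Hr. pose proof (energy_conservation r Hr) as HE.
  assert (Hsq : sqrt (1 - s r ^ 2) <= sqrt 1) by (apply sqrt_le_1_alt; nra).
  rewrite sqrt_1 in Hsq.
  apply Rmult_le_reg_l with kappa; lra.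
Qed.

(* u cannot jump past the forbidden band -u0 < u < u0, since it is continuous. *)
Lemma u_ge_u0 r : 0 <= r < a -> u0 <= u r.
Proof.
  intros Hr. pose proof (u_sq_ge_u0_sq r Hr).
  destruct (Rle_or_lt u0 (u r)) as [| Hlt]; [assumption | exfalso].
  assert (Hneg : u r < 0) by nra.
  assert (Hr0 : 0 < r) by (destruct (Req_dec r 0) as [-> |]; lra).
  destruct (Ranalysis5.IVT_interv (fun t => - u t) 0 r) as [z [Hz Huz]]; [| lra | lra | lra |].
  - intros t Ht. apply (is_derive_continuity_pt _ _ (- du t)).
    apply (is_derive_opp u t (du t)), u_derive. lra.
  - pose proof (u_sq_ge_u0_sq z ltac:(lra)). assert (u z = 0) by lra. nra.
Qed.

Lemma sin_psi_pos r : 0 < r < a -> 0 < s r.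
Proof.
  intros Hr. rewrite <- sin_psi_at_0.
  apply (is_derive_pos_lt s (fun t => kappa * u t) 0 a s_derive); [| exact Hr].
  intros t Ht. pose proof (u_ge_u0 t ltac:(lra)). nra.
Qed.

Lemma du_pos r : 0 < r < a -> 0 < du r.
Proof.
  intros Hr. rewrite <- (tan_of_sin_psi du r). unfold tan_of_sin.
  pose proof (sin_psi_bounds du r).
  apply Rdiv_lt_0_compat; [now apply sin_psi_pos | apply sqrt_lt_R0; nra].
Qed.

Lemma u_gt_u0 r : 0 < r < a -> u0 < u r.
Proof. intros Hr. rewrite <- u_at_0. exact (is_derive_pos_lt u du 0 a u_derive du_pos r Hr). Qed.

Lemma u0_lt_u_wall : u0 < u a.
Proof.
  rewrite <- u_at_0. exact (is_derive_pos_lt_left_lim u du 0 a (u a) a_pos u_derive du_pos u_lim).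
Qed.

Let is_derive_sin_psi_sub_linear r : 0 <= r < a ->
  is_derive (fun t => s t - kappa * u0 * t) r (kappa * u r - kappa * u0).
Proof.
  intros Hr. apply (is_derive_minus s (fun t => kappa * u0 * t)); [now apply s_derive |].
  auto_derive; [exact I | ring].
Qed.

Let sin_psi_sub_linear_deriv_pos r : 0 < r < a -> 0 < kappa * u r - kappa * u0.
Proof. intros Hr. pose proof (u_gt_u0 r Hr). nra. Qed.

Lemma sin_psi_gt_linear r : 0 < r < a -> kappa * u0 * r < s r.
Proof.
  intros Hr.
  pose proof (is_derive_pos_lt _ _ 0 a is_derive_sin_psi_sub_linear
    sin_psi_sub_linear_deriv_pos r Hr) as Hlt.
  cbv beta in Hlt. rewrite sin_psi_at_0 in Hlt. lra.
Qed.

Lemma kappa_u0_a_lt_contact : kappa * u0 * a < c.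
Proof.
  assert (Hlim : filterlim (fun t => s t - kappa * u0 * t) (at_left a)
                   (locally (c - kappa * u0 * a))).
  { apply filterlim_Rminus; [exact contact |].
    apply (filterlim_at_left_of_continuous (fun t => kappa * u0 * t)).
    apply (ex_derive_continuous (K := R_AbsRing) (V := R_NormedModule)). auto_derive. auto. }
  pose proof (is_derive_pos_lt_left_lim _ _ 0 a _ a_pos is_derive_sin_psi_sub_linear
    sin_psi_sub_linear_deriv_pos Hlim) as Hlt.
  cbv beta in Hlt. rewrite sin_psi_at_0 in Hlt. lra.
Qed.

Lemma contact_pos : 0 < c.
Proof.
  pose proof kappa_u0_a_lt_contact.
  assert (0 < kappa * u0 * a) by (repeat apply Rmult_lt_0_compat; lra). lra.
Qed.

Lemma contact_le_1 : c <= 1.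
Proof.
  apply (filterlim_at_left_le s (fun _ => 1) a 0); [lra | | exact contact | apply filterlim_const].
  intros t _. apply Rlt_le, sin_psi_bounds.
Qed.

Lemma sin_psi_lt_r_kappa_u r : 0 < r < a -> s r < r * (kappa * u r).
Proof.
  intros Hr.
  assert (Hderiv : forall t, 0 <= t < a ->
    is_derive (fun t => t * (kappa * u t) - s t) t (t * (kappa * du t))).
  { intros t Ht. pose proof (s_derive t Ht) as Hs. pose proof (u_derive t Ht) as Hu.
    auto_derive; [repeat split; eexists; eassumption |].
    rewrite (is_derive_unique (fun x : R => s x) t _ Hs),
      (is_derive_unique (fun x : R => u x) t _ Hu).
    ring. }
  assert (Hpos : forall t, 0 < t < a -> 0 < t * (kappa * du t)).
  { intros t Ht. pose proof (du_pos t Ht). apply Rmult_lt_0_compat; nra. }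
  pose proof (is_derive_pos_lt _ _ 0 a Hderiv Hpos r Hr) as Hlt.
  cbv beta in Hlt. rewrite sin_psi_at_0 in Hlt. lra.
Qed.

Lemma sin_psi_lt_chord r : 0 < r < a -> s r < c / a * r.
Proof.
  intros Hr.
  assert (Hderiv : forall t, r <= t < a ->
    is_derive (fun t => s t / t) t ((kappa * u t * t - s t * 1) / t ^ 2)).
  { intros t Ht. apply (is_derive_div s (fun t => t));
      [apply s_derive; lra | apply (is_derive_id (K := R_AbsRing)) | lra]. }
  assert (Hpos : forall t, r < t < a -> 0 < (kappa * u t * t - s t * 1) / t ^ 2).
  { intros t Ht. pose proof (sin_psi_lt_r_kappa_u t ltac:(lra)).
    apply Rdiv_lt_0_compat; [nra | apply pow_lt; lra]. }
  assert (Hlim : filterlim (fun t => s t / t) (at_left a) (locally (c / a))).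
  { apply filterlim_Rmult; [exact contact |].
    apply (filterlim_at_left_of_continuous Rinv).
    apply (ex_derive_continuous (K := R_AbsRing) (V := R_NormedModule)). auto_derive. lra. }
  pose proof (is_derive_pos_lt_left_lim _ _ r a _ ltac:(lra) Hderiv Hpos Hlim) as Hlt.
  cbv beta in Hlt. apply (Rmult_lt_reg_r (/ r)); [apply Rinv_0_lt_compat; lra |].
  replace (c / a * r * / r) with (c / a) by (field; lra). exact Hlt.
Qed.

Lemma arc_lt_height : arc (kappa * u0) a < u a - u0.
Proof.
  pose proof kappa_u0_a_lt_contact. pose proof contact_le_1.
  assert (Hrange : forall t, 0 <= t < a -> 0 <= kappa * u0 * t < 1).
  { intros t Ht. assert (0 < kappa * u0) by (apply Rmult_lt_0_compat; lra).
    assert (kappa * u0 * t <= kappa * u0 * a) by (apply Rmult_le_compat_l; lra).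
    split; [apply Rmult_le_pos |]; lra. }
  assert (Hderiv : forall t, 0 <= t < a ->
    is_derive (fun t => u t - arc (kappa * u0) t) t (du t - tan_of_sin (kappa * u0 * t))).
  { intros t Ht. apply (is_derive_minus u (arc (kappa * u0))); [now apply u_derive |].
    apply is_derive_arc; [nra | pose proof (Hrange t Ht); lra]. }
  assert (Hpos : forall t, 0 < t < a -> 0 < du t - tan_of_sin (kappa * u0 * t)).
  { intros t Ht. rewrite <- (tan_of_sin_psi du t).
    pose proof (sin_psi_gt_linear t Ht). pose proof (sin_psi_bounds du t).
    pose proof (Hrange t ltac:(lra)).
    assert (tan_of_sin (kappa * u0 * t) < tan_of_sin (s t)) by (apply tan_of_sin_lt; lra). lra. }
  assert (Hlim : filterlim (fun t => u t - arc (kappa * u0) t) (at_left a)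
                   (locally (u a - arc (kappa * u0) a))).
  { apply filterlim_Rminus; [exact u_lim |].
    apply filterlim_at_left_of_continuous, continuous_arc. }
  pose proof (is_derive_pos_lt_left_lim _ _ 0 a _ a_pos Hderiv Hpos Hlim) as Hlt.
  cbv beta in Hlt. rewrite arc_0, u_at_0 in Hlt. lra.
Qed.

Lemma height_lt_arc : u a - u0 < arc (c / a) a.
Proof.
  pose proof contact_le_1.
  assert (Hc : 0 < c / a) by (apply Rdiv_lt_0_compat; [apply contact_pos | lra]).
  assert (Hrange : forall t, 0 <= t < a -> 0 <= c / a * t < 1).
  { intros t Ht. assert (c / a * t < c / a * a) by (apply Rmult_lt_compat_l; lra).
    replace (c / a * a) with c in * by (field; lra). split; [apply Rmult_le_pos |]; lra. }
  assert (Hderiv : forall t, 0 <= t < a ->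
    is_derive (fun t => arc (c / a) t - u t) t (tan_of_sin (c / a * t) - du t)).
  { intros t Ht. apply (is_derive_minus (arc (c / a)) u); [| now apply u_derive].
    apply is_derive_arc; [exact Hc | pose proof (Hrange t Ht); lra]. }
  assert (Hpos : forall t, 0 < t < a -> 0 < tan_of_sin (c / a * t) - du t).
  { intros t Ht. rewrite <- (tan_of_sin_psi du t).
    pose proof (sin_psi_lt_chord t Ht). pose proof (sin_psi_pos t Ht).
    pose proof (Hrange t ltac:(lra)).
    assert (tan_of_sin (s t) < tan_of_sin (c / a * t)) by (apply tan_of_sin_lt; lra). lra. }
  assert (Hlim : filterlim (fun t => arc (c / a) t - u t) (at_left a)
                   (locally (arc (c / a) a - u a))).
  { apply filterlim_Rminus; [| exact u_lim].
    apply filterlim_at_left_of_continuous, continuous_arc. }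
  pose proof (is_derive_pos_lt_left_lim _ _ 0 a _ a_pos Hderiv Hpos Hlim) as Hlt.
  cbv beta in Hlt. rewrite arc_0, u_at_0 in Hlt. lra.
Qed.

Lemma energy_at_wall : sqrt (1 - c ^ 2) + kappa * u a ^ 2 / 2 = 1 + kappa * u0 ^ 2 / 2.
Proof.
  set (E := fun t => sqrt (1 - s t ^ 2) + kappa * u t ^ 2 / 2).
  assert (Hlim : filterlim E (at_left a) (locally (sqrt (1 - c ^ 2) + kappa * u a ^ 2 / 2))).
  { apply filterlim_Rplus.
    - apply (filterlim_comp _ _ _ s (fun x => sqrt (1 - x ^ 2)) _ _ _ contact).
      apply (continuous_sqrt_comp (fun x => 1 - x ^ 2)).
      apply (ex_derive_continuous (K := R_AbsRing) (V := R_NormedModule)). auto_derive. auto.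
    - apply (filterlim_comp _ _ _ u (fun x => kappa * x ^ 2 / 2) _ _ _ u_lim).
      apply (ex_derive_continuous (K := R_AbsRing) (V := R_NormedModule)
               (fun x => kappa * x ^ 2 / 2)).
      auto_derive. auto. }
  assert (Hconst : filterlim E (at_left a) (locally (1 + kappa * u0 ^ 2 / 2))).
  { apply (filterlim_ext_loc (fun _ => 1 + kappa * u0 ^ 2 / 2)); [| apply filterlim_const].
    apply (filter_imp (fun t => 0 < t < a)); [| exact (at_left_interval 0 a a_pos)].
    intros t Ht. symmetry. apply energy_conservation. lra. }
  exact (filterlim_locally_unique (F := at_left a) E _ _ Hlim Hconst).
Qed.

End Capillary.

Theorem mainTheorem9 (kappa u0 a gamma : R) (u du : R -> R) :
  0 < kappa -> 0 < u0 -> 0 < a -> 0 <= gamma < PI / 2 ->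
  capillary_solution kappa u0 a u du ->
  (* u extends continuously to r = a (this defines u(a)) *)
  filterlim u (at_left a) (locally (u a)) ->
  (* sin psi extends continuously to r = a with value cos gamma *)
  filterlim (sin_psi du) (at_left a) (locally (cos gamma)) ->
  let q := u a - u 0 in
  (1 / (kappa * u0) * (1 - sqrt (1 - a ^ 2 * kappa ^ 2 * u0 ^ 2)) < q /\
   q < a / cos gamma * (1 - sin gamma)) /\
  q > 2 * a * (1 - sin gamma) /
        (1 + sqrt (1 + 2 * kappa * a ^ 2 * (1 - sin gamma))).
Proof.
  intros Hk Hu0 Ha Hg Hsol Hlu Hls q.
  assert (Hcos : 0 < cos gamma <= 1) by (split; [apply cos_gt_0 | apply COS_bound]; lra).
  assert (Hsin : sqrt (1 - cos gamma ^ 2) = sin gamma).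
  { rewrite <- (sin2_cos2 gamma). unfold Rsqr. replace (_ + _ - _) with (sin gamma ^ 2) by ring.
    apply sqrt_pow2, sin_ge_0; lra. }
  pose proof (arc_lt_height _ _ _ _ _ _ Hk Hu0 Ha Hsol Hlu Hls) as Hlower.
  pose proof (height_lt_arc _ _ _ _ _ _ Hk Hu0 Ha Hsol Hlu Hls) as Hupper.
  pose proof (energy_at_wall _ _ _ _ _ _ Ha Hsol Hlu Hls) as Henergy.
  pose proof (u0_lt_u_wall _ _ _ _ _ Hk Hu0 Ha Hsol Hlu) as Hq.
  pose proof (kappa_u0_a_lt_contact _ _ _ _ _ _ Hk Hu0 Ha Hsol Hls) as Hcontact.
  unfold arc in Hlower, Hupper. rewrite Hsin in Henergy.
  replace (cos gamma / a * a) with (cos gamma) in Hupper by (field; lra).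
  rewrite Hsin in Hupper.
  replace ((kappa * u0 * a) ^ 2) with (a ^ 2 * kappa ^ 2 * u0 ^ 2) in Hlower by ring.
  destruct Hsol as (_ & _ & Hu00 & _). unfold q. rewrite Hu00.
  split; [split |].
  - exact Hlower.
  - replace (a / cos gamma) with (1 / (cos gamma / a)) by (field; lra). exact Hupper.
  - apply Rlt_gt, (energy_relation_lower_bound kappa u0 a); [lra .. |]. lra.
Qed.
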